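(* For every pair $(k,\ell)$ of positive integers and every prime power $q$, there are only finitely many (up to isomorphism) simple, cosimple, $GF(q)$-representable matroids that are $(k,\ell)$-uniform.
   Context: For positive integers $k,\ell$, a matroid is called $(k,\ell)$-uniform if it has no minor isomorphic to $U_{k,k}\oplus U_{0,\ell}$ (the direct sum of a $k$-element free matroid and $\ell$ loops). A matroid is cosimple if its dual is simple. *)

From HB Require Import structures.
From mathcomp Require Import all_boot all_order all_algebra all_field.

Set Implicit Arguments.
Unset Strict Implicit.
Unset Printing Implicit Defensive.

Import GRing.Theory.
Local Open Scope ring_scope.

(* A matroid on the finite ground set T (the whole type), given by its
   independent sets. *)
Record matroid (T : finType) := Matroid {
  indep : {set T} -> bool;
  indep0 : indep set0;
  indep_sub : forall X Y : {set T}, X \subset Y -> indep Y -> indep X;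
  indep_aug : forall X Y : {set T}, indep X -> indep Y -> (#|X| < #|Y|)%N ->
      exists2 y, y \in Y :\: X & indep (y |: X)
}.

Definition rk (T : finType) (M : matroid T) (X : {set T}) : nat :=
  \max_(Y : {set T} | (Y \subset X) && indep M Y) #|Y|.

(* Simple: no loops and no parallel pairs, i.e. every set of size <= 2 is
   independent. *)
Definition simple (T : finType) (M : matroid T) : Prop :=
  forall X : {set T}, (#|X| <= 2)%N -> indep M X.

(* Independent sets of the dual matroid: X is coindependent iff its
   complement spans, i.e. contains a basis. *)
Definition coindep (T : finType) (M : matroid T) (X : {set T}) : bool :=
  rk M (~: X) == rk M setT.

Definition cosimple (T : finType) (M : matroid T) : Prop :=
  forall X : {set T}, (#|X| <= 2)%N -> coindep M X.

Definition miso (T T' : finType) (M : matroid T) (N : matroid T') : Prop :=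
  exists f : T -> T', bijective f /\
    forall X : {set T}, indep N (f @: X) = indep M X.

(* M has a minor isomorphic to the matroid on T' with independence
   predicate indN: there are disjoint C (contracted) and D (deleted) and a
   bijection f from T' onto the remaining ground set E - (C u D), such that
   X is independent in N iff f(X) is independent in M / C \ D, where
   I (disjoint from C) is independent in M / C iff r(I u C) = |I| + r(C). *)
Definition has_minor (T T' : finType) (M : matroid T)
    (indN : {set T'} -> bool) : Prop :=
  exists (C D : {set T}) (f : T' -> T),
    [/\ [disjoint C & D], injective f,
        f @: [set: T'] = ~: (C :|: D) &
        forall X : {set T'},
          indN X = (rk M (f @: X :|: C) == #|X| + rk M C)%N].

(* The matroid U_{k,k} (+) U_{0,l} on 'I_(k+l): elements < k are free,
   the remaining l elements are loops. *)
Definition free_plus_loops (k l : nat) (X : {set 'I_(k + l)}) : bool :=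
  X \subset [set i : 'I_(k + l) | (i < k)%N].

Definition kl_uniform (k l : nat) (T : finType) (M : matroid T) : Prop :=
  ~ has_minor M (@free_plus_loops k l).

(* GF(q)-representable: there is a field F with q elements and vectors
   v e (e in T) in F^n such that X is independent iff (v e)_{e in X} is
   linearly independent (as a family, so no repetitions). *)
Definition representable (q : nat) (T : finType) (M : matroid T) : Prop :=
  exists (F : finFieldType) (n : nat) (v : T -> 'rV[F]_n),
    #|F| = q /\
    forall X : {set T}, indep M X = free [seq v x | x <- enum X].

Definition prime_power (q : nat) : Prop :=
  exists p e : nat, [/\ prime p, (0 < e)%N & q = (p ^ e)%N].

(* Let B be a maximum independent set of a simple, cosimple, (k,l)-uniform
   matroid represented over GF(q), and describe every element by its
   coordinates with respect to B.  Simplicity makes these coordinate vectors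
   pairwise distinct, so there are at most q^|B| elements and it suffices to
   bound |B|.  Cosimplicity forces two basis elements to differ in some
   coordinate of an element outside B, so |B| <= q^|E - B|, which settles the
   case |E - B| <= l.  Otherwise fix l+1 elements outside B; if
   |B| > k q^(l+1), more than k basis indices see the same coordinates on
   them.  Pivoting on one such index and contracting the basis elements
   outside that fibre turns l of the chosen elements into loops while k basis
   elements of the fibre stay free: a U_{k,k} (+) U_{0,l} minor. *)

From mathcomp Require Import all_boot all_order all_algebra all_field.
From Stdlib Require Import ClassicalEpsilon.

Set Implicit Arguments.
Unset Strict Implicit.
Unset Printing Implicit Defensive.

Import GRing.Theory.

Lemma pigeonhole_fiber (I U : finType) (g : I -> U) (m : nat) :
  (m * #|U| < #|I|)%N -> exists u, (m < #|[set i | g i == u]|)%N.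
Proof.
move=> lt_mU_I; apply/existsP; apply: contraTT lt_mU_I => /existsPn small.
rewrite -leqNgt -sum1_card (partition_big g xpredT) //= mulnC -sum_nat_const.
apply: leq_sum => u _; have := small u; rewrite -leqNgt; apply: leq_trans.
by rewrite -sum1_card; apply/eq_leq/eq_bigl => i; rewrite inE.
Qed.

Lemma inj_ord_of_leq_card (T : finType) (A : {set T}) (m : nat) :
  (m <= #|A|)%N -> exists2 f : 'I_m -> T, injective f & forall j, f j \in A.
Proof.
move=> mA; exists (fun j => enum_val (widen_ord mA j)); last by move=> j; apply: enum_valP.
by move=> j j' /enum_val_inj/(congr1 val) /= /val_inj.
Qed.

Section MatroidFacts.

Variables (T : finType) (M : matroid T).

Lemma indep_leq_rk (A Y : {set T}) : Y \subset A -> indep M Y -> (#|Y| <= rk M A)%N.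
Proof.
by move=> YA iY; apply: (@leq_bigmax_cond _ _ (fun Y : {set T} => #|Y|) Y); rewrite YA.
Qed.

Lemma rk_leq_card (A : {set T}) : (rk M A <= #|A|)%N.
Proof. by apply/bigmax_leqP => Y /andP[YA _]; apply: subset_leq_card. Qed.

Lemma rk_indep (A : {set T}) : indep M A -> rk M A = #|A|.
Proof. by move=> iA; apply/eqP; rewrite eqn_leq rk_leq_card indep_leq_rk. Qed.

Lemma rk_witness (A : {set T}) :
  exists W : {set T}, [/\ W \subset A, indep M W & rk M A = #|W|].
Proof.
have [|W /andP[WA iW] rkW] :=
  @eq_bigmax_cond _ (fun Y : {set T} => (Y \subset A) && indep M Y) (fun Y => #|Y|).
  by apply/card_gt0P; exists set0; apply/andP; rewrite sub0set indep0.
by exists W.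
Qed.

Lemma rk_eq_card (A : {set T}) : (rk M A == #|A|) = indep M A.
Proof.
apply/idP/idP => [/eqP rkA | /rk_indep -> //].
have [W [WA iW rkW]] := rk_witness A.
suff /eqP <- : W == A by [].
by rewrite eqEcard WA -rkA rkW leqnn.
Qed.

Definition max_indep : {set T} := [arg max_(Y > set0 | indep M Y) #|Y|].

Lemma max_indep_indep : indep M max_indep.
Proof. by rewrite /max_indep; case: arg_maxnP => //; exact: indep0. Qed.

Lemma leq_card_max_indep (Y : {set T}) : indep M Y -> (#|Y| <= #|max_indep|)%N.
Proof. by rewrite /max_indep; case: arg_maxnP => [|X _ maxX /maxX] //; exact: indep0. Qed.

Lemma rk_setT : rk M setT = #|max_indep|.
Proof.
apply/eqP; rewrite eqn_leq indep_leq_rk ?subsetT ?max_indep_indep // andbT.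
by apply/bigmax_leqP => Y /andP[_]; apply: leq_card_max_indep.
Qed.

Variables (k l : nat).

Lemma free_plus_loops_minor_embedding (Z : {set T}) (f : 'I_(k + l) -> T) :
    injective f -> (forall i, f i \notin Z) ->
    (forall X : {set 'I_(k + l)}, indep M (f @: X :|: Z) = free_plus_loops X) ->
  has_minor M (@free_plus_loops k l).
Proof.
move=> f_inj fZ indep_f.
have iZ : indep M Z.
  by rewrite -[Z]set0U -(imset0 f) indep_f /free_plus_loops sub0set.
exists Z, (~: (Z :|: f @: setT)), f; split => //.
- by rewrite disjoints_subset setCK subsetUl.
- apply/setP => y; rewrite !inE.
  case: (boolP (y \in f @: setT)) => [/imsetP[x _ ->]|_]; last by rewrite orbF orbN.
  by rewrite (negbTE (fZ x)).
move=> X; rewrite (rk_indep iZ) -indep_f -rk_eq_card -(card_imset X f_inj) cardsU.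
suff -> : f @: X :&: Z = set0 by rewrite cards0 subn0.
apply/setP => y; rewrite !inE.
by case: (boolP (y \in f @: X)) => [/imsetP[x _ ->]|//]; exact: negbTE (fZ x).
Qed.

Lemma free_plus_loops_minor (Z A L : {set T}) :
    [disjoint Z & A] -> [disjoint A & L] -> (k <= #|A|)%N -> (l <= #|L|)%N ->
    indep M (Z :|: A) -> {in L, forall x, ~~ indep M (x |: Z)} ->
  has_minor M (@free_plus_loops k l).
Proof.
move=> ZA AL kA lL iZA depL.
have [fA fA_inj fA_A] := inj_ord_of_leq_card kA.
have [fL fL_inj fL_L] := inj_ord_of_leq_card lL.
have fL_Z j : fL j \notin Z.
  apply: contra (depL _ (fL_L j)) => Zj; rewrite (setUidPr _) ?sub1set //.
  by apply: indep_sub iZA; apply: subsetUl.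
pose g (x : 'I_k + 'I_l) := match x with inl j => fA j | inr j => fL j end.
have g_inj : injective g.
  case=> j [] j' //= eq_g.
  - by rewrite (fA_inj _ _ eq_g).
  - by move: (fL_L j'); rewrite -eq_g (disjointFr AL (fA_A j)).
  - by move: (fL_L j); rewrite eq_g (disjointFr AL (fA_A j')).
  - by rewrite (fL_inj _ _ eq_g).
pose f := g \o split.
apply: (@free_plus_loops_minor_embedding Z f).
- exact: inj_comp g_inj (can_inj splitK).
- move=> i; rewrite /f /=; case: (split i) => j /=; last exact: fL_Z.
  by rewrite (disjointFl ZA (fA_A j)).
move=> X; rewrite /free_plus_loops; case: (boolP (X \subset _)) => [XA | /subsetPn[i iX]].
  apply: indep_sub iZA; rewrite setUC setUS //; apply/subsetP => _ /imsetP[i iX ->].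
  by have := subsetP XA i iX; rewrite inE /f /=; case: splitP => j _ //= _; apply: fA_A.
rewrite inE => i_loop; have fiL : f i \in L.
  by move: i_loop; rewrite /f /=; case: splitP => j _ //= _; apply: fL_L.
apply/negbTE; apply: contra (depL _ fiL); apply: indep_sub.
by rewrite setSU // sub1set imset_f.
Qed.

End MatroidFacts.

Section SpanOfFamily.

Variables (F : fieldType) (n : nat) (T : finType) (v : T -> 'rV[F]_n).
Local Open Scope ring_scope.

Definition vspan (A : {set T}) : {vspace 'rV[F]_n} := <<[seq v x | x <- enum A]>>%VS.

Lemma mem_vspan (A : {set T}) x : x \in A -> v x \in vspan A.
Proof. by move=> xA; apply: memv_span; apply: map_f; rewrite mem_enum. Qed.

Lemma vspan_subP (A : {set T}) (U : {vspace 'rV[F]_n}) :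
  reflect {in A, forall x, v x \in U} (vspan A <= U)%VS.
Proof.
apply: (iffP span_subvP) => [sAU x xA | sAU y /mapP[x]].
  by apply/sAU/map_f; rewrite mem_enum.
by rewrite mem_enum => xA ->; apply: sAU.
Qed.

Lemma vspanS (A B : {set T}) : A \subset B -> (vspan A <= vspan B)%VS.
Proof. by move=> /subsetP AB; apply/vspan_subP => x /AB; apply: mem_vspan. Qed.

Lemma free_map_setU1 (A : {set T}) x : x \notin A ->
  free [seq v y | y <- enum (x |: A)] =
  (v x \notin vspan A) && free [seq v y | y <- enum A].
Proof.
move=> xA; rewrite -free_cons; apply: perm_free.
rewrite -[_ :: _]/(map v (x :: enum A)); apply: perm_map.
apply: uniq_perm; rewrite /= ?mem_enum ?xA ?enum_uniq //.
by move=> y; rewrite mem_enum in_setU1 inE mem_enum.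
Qed.

Lemma scalar_vspan_eq0 (psi : {scalar 'rV[F]_n}) (A : {set T}) y :
  {in A, forall x, psi (v x) = 0} -> y \in vspan A -> psi y = 0.
Proof.
move=> psiA /(coord_span (X := in_tuple _)) ->; rewrite linear_sum big1 // => i _.
set s := [seq v x | x <- enum A].
rewrite linearZ /=; have /mapP[x] : (in_tuple s)`_i \in s by apply: mem_nth.
by rewrite mem_enum => xA ->; rewrite psiA // mulr0.
Qed.

End SpanOfFamily.

Section Represented.

Variables (F : fieldType) (n : nat) (T : finType) (M : matroid T) (v : T -> 'rV[F]_n).
Hypothesis v_repr : forall X : {set T}, indep M X = free [seq v x | x <- enum X].
Local Open Scope ring_scope.

Lemma indep_setU1 (A : {set T}) x :
  x \notin A -> indep M (x |: A) = (v x \notin vspan v A) && indep M A.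
Proof. by move=> xA; rewrite !v_repr free_map_setU1. Qed.

Lemma simple_repr_inj : simple M -> injective v.
Proof.
move=> sM x y vxy; apply/eqP; apply: contraT => xy.
have := sM [set x; y]; rewrite cards2 xy indep_setU1 ?inE //.
by rewrite vxy mem_vspan ?set11 // => /(_ isT).
Qed.

Local Notation B := (max_indep M).

Lemma mem_vspan_max_indep x : v x \in vspan v B.
Proof.
have [xB | xNB] := boolP (x \in B); first exact: mem_vspan.
apply/negPn/negP => vx; have := @leq_card_max_indep _ M (x |: B).
by rewrite indep_setU1 // vx max_indep_indep cardsU1 xNB ltnn => /(_ isT).
Qed.

Definition basis_elt (i : 'I_#|B|) : T := enum_val i.

Definition basis_tuple : #|B|.-tuple 'rV[F]_n := [tuple v (basis_elt i) | i < #|B|].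

Local Notation c i := (coord basis_tuple i).

Lemma basis_elt_inj : injective basis_elt.
Proof. exact: enum_val_inj. Qed.

Lemma basis_elt_in i : basis_elt i \in B.
Proof. exact: enum_valP. Qed.

Lemma basis_eltP x : x \in B -> exists i, x = basis_elt i.
Proof. by move=> xB; exists (enum_rank_in xB x); rewrite /basis_elt enum_rankK_in. Qed.

Lemma nth_basis_tuple (i : 'I_#|B|) : basis_tuple`_i = v (basis_elt i).
Proof. by rewrite -tnth_nth tnth_mktuple. Qed.

Lemma span_basis_tuple : <<basis_tuple>>%VS = vspan v B.
Proof.
apply: eq_span => y; apply/mapP/mapP => [[i _ ->] | [x]].
  by exists (basis_elt i); rewrite ?mem_enum ?basis_elt_in.
by rewrite mem_enum => /basis_eltP[i ->] ->; exists i; rewrite ?mem_enum.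
Qed.

Lemma free_basis_tuple : free basis_tuple.
Proof.
rewrite /free span_basis_tuple size_tuple.
by have := max_indep_indep M; rewrite v_repr /free size_map -cardE.
Qed.

Lemma coord_basis_elt i j : c i (v (basis_elt j)) = (j == i)%:R.
Proof. by rewrite -nth_basis_tuple (coord_free _ _ free_basis_tuple) eq_sym. Qed.

Lemma coord_max_indep i x : x \in B -> c i (v x) = (x == basis_elt i)%:R.
Proof. by case/basis_eltP=> j ->; rewrite coord_basis_elt (inj_eq basis_elt_inj). Qed.

Lemma coord_expansion y : y \in vspan v B -> y = \sum_i c i y *: v (basis_elt i).
Proof.
rewrite -span_basis_tuple => /coord_span {1}->.
by apply: eq_bigr => i _; rewrite nth_basis_tuple.
Qed.

Lemma coord_eq0_vspan (J : {set 'I_#|B|}) y :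
    y \in vspan v B -> {in J, forall i, c i y = 0} ->
  y \in vspan v (B :\: basis_elt @: J).
Proof.
move=> yB cJ; rewrite (coord_expansion yB); apply: memv_suml => i _.
have [iJ | iNJ] := boolP (i \in J); first by rewrite cJ // scale0r mem0v.
apply/memvZ/mem_vspan; rewrite inE basis_elt_in andbT.
by rewrite (mem_imset _ _ basis_elt_inj).
Qed.

Lemma coord_vspanD1 i y : y \in vspan v (B :\ basis_elt i) -> c i y = 0.
Proof.
apply: scalar_vspan_eq0 => x; rewrite !inE => /andP[xi xB].
by have := coord_max_indep i xB; rewrite (negbTE xi).
Qed.

Lemma max_indep_exchange i z :
  c i (v z) != 0 -> indep M (z |: (B :\ basis_elt i)).
Proof.
move=> cz; have vz : v z \notin vspan v (B :\ basis_elt i).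
  by apply: contra cz => /coord_vspanD1 ->.
have zB : z \notin B :\ basis_elt i by apply: contra vz; apply: mem_vspan.
by rewrite indep_setU1 // vz; apply: indep_sub (max_indep_indep M); apply: subsetDl.
Qed.

Lemma equal_coords_not_coindep i j :
    i != j -> {in ~: B, forall x, c i (v x) = c j (v x)} ->
  ~~ coindep M [set basis_elt i; basis_elt j].
Proof.
move=> ij cij; rewrite /coindep rk_setT; set X := [set _; _].
have [W [WX iW ->]] := rk_witness M (~: X); rewrite ltn_eqF //.
pose psi : {scalar 'rV[F]_n} := c i \- c j.
have psiW : {in W, forall x, psi (v x) = 0}.
  move=> x /(subsetP WX); rewrite !inE negb_or => /andP[xi xj] /=.
  have [xB | xNB] := boolP (x \in B); last by rewrite cij ?inE // subrr.
  by rewrite !coord_max_indep // (negbTE xi) (negbTE xj) subrr.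
have vbW : v (basis_elt i) \notin vspan v W.
  apply/negP => /(scalar_vspan_eq0 psiW) /=.
  by rewrite !coord_basis_elt eqxx (negbTE ij) subr0 => /eqP; rewrite oner_eq0.
have bW : basis_elt i \notin W by apply: contra vbW; apply: mem_vspan.
have := @leq_card_max_indep _ M (basis_elt i |: W).
by rewrite indep_setU1 // vbW iW cardsU1 bW => /(_ isT).
Qed.

Section CommonCoordinates.

Variables (l : nat) (e : 'I_l.+1 -> T) (J : {set 'I_#|B|}) (u : 'I_l.+1 -> F).
Hypotheses (e_inj : injective e) (e_notin : forall t, e t \notin B).
Hypothesis coord_e : {in J, forall i t, c i (v (e t)) = u t}.

Local Notation W := (B :\: basis_elt @: J).

(* The pivot is [e s] for some [s] with [u s != 0], or [basis_elt i0] when [u]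
   vanishes identically. *)
Lemma exists_pivot i0 : i0 \in J ->
  exists z s, [/\ c i0 (v z) != 0, forall t, t != s -> e t != z
                & forall t, t != s -> v (e t) \in vspan v (z |: W)].
Proof.
move=> i0J; have sub_W z : (vspan v W <= vspan v (z |: W))%VS by apply/vspanS/subsetUr.
have [s us | u0] := pickP (fun t => u t != 0).
  exists (e s), s; split=> [|t ts|t ts]; first by rewrite coord_e.
    by rewrite (inj_eq e_inj).
  pose r := u t / u s.
  have eW : v (e t) - r *: v (e s) \in vspan v W.
    apply: coord_eq0_vspan => [|i iJ].
      by rewrite memvB ?memvZ ?mem_vspan_max_indep.
    by rewrite linearB linearZ /= !coord_e // mulfVK ?subrr.
  rewrite -[v (e t)](subrK (r *: v (e s))); apply: memvD.
    exact: subvP (sub_W _) _ eW.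
  by apply/memvZ/mem_vspan; rewrite setU11.
exists (basis_elt i0), ord0; split=> [|t _|t _].
- by rewrite coord_basis_elt eqxx oner_eq0.
- by apply: contraNneq (e_notin t) => ->; apply: basis_elt_in.
apply: (subvP (sub_W _)); apply: coord_eq0_vspan => [|i iJ].
  exact: mem_vspan_max_indep.
by rewrite coord_e //; apply/eqP/negbFE/u0.
Qed.

Lemma common_coords_minor k : (k < #|J|)%N -> has_minor M (@free_plus_loops k l).
Proof.
move=> kJ; have [i0 i0J] : exists i0, i0 \in J by apply/card_gt0P; apply: leq_ltn_trans kJ.
have [z [s [cz ez loops]]] := exists_pivot i0J.
have zB : z \notin B :\ basis_elt i0.
  by apply: contra cz => /(mem_vspan v) /coord_vspanD1 ->.
have A_B : basis_elt @: (J :\ i0) \subset B :\ basis_elt i0.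
  apply/subsetP => y /imsetP[j]; rewrite !inE => /andP[ji0 _] ->.
  by rewrite (inj_eq basis_elt_inj) ji0 basis_elt_in.
apply: (@free_plus_loops_minor _ M k l (z |: W) (basis_elt @: (J :\ i0)) (e @: [set~ s])).
- rewrite disjoint_sym disjoints_subset; apply/subsetP => y /imsetP[j jJ ->].
  have bjB := subsetP A_B _ (imset_f basis_elt jJ).
  rewrite !inE negb_or; apply/andP; split; first by apply: contraNneq zB => <-.
  by case/setD1P: jJ => _ jJ; rewrite imset_f.
- rewrite disjoints_subset; apply/subsetP => x /(subsetP A_B) /setD1P[_ xB].
  by rewrite inE; apply/imsetP => -[t _ xe]; move: (e_notin t); rewrite -xe xB.
- by rewrite (card_imset _ basis_elt_inj); move: kJ; rewrite (cardsD1 i0) i0J.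
- by rewrite (card_imset _ e_inj) cardsC1 card_ord.
- apply: indep_sub (max_indep_exchange cz); rewrite -setUA setUS // subUset A_B andbT.
  apply/subsetP => x; rewrite !inE => /andP[xJ ->]; rewrite andbT.
  by apply: contra xJ => /eqP ->; apply: imset_f.
move=> y /imsetP[t]; rewrite !inE => ts ->.
rewrite indep_setU1 ?(loops t ts) //.
by rewrite !inE negb_or ez // (negbTE (e_notin t)) andbF.
Qed.

End CommonCoordinates.
End Represented.

Section FiniteField.

Variables (F : finFieldType) (n : nat) (T : finType) (M : matroid T) (v : T -> 'rV[F]_n).
Hypothesis v_repr : forall X : {set T}, indep M X = free [seq v x | x <- enum X].
Local Open Scope ring_scope.

Local Notation B := (max_indep M).
Local Notation c i := (coord (basis_tuple M v) i).

Lemma simple_card_leq : simple M -> (#|T| <= #|F| ^ #|B|)%N.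
Proof.
move=> sM; pose h x : {ffun 'I_#|B| -> F} := [ffun i => c i (v x)].
suff h_inj : injective h by have := leq_card h h_inj; rewrite card_ffun card_ord.
move=> x y /ffunP hxy; apply: (simple_repr_inj v_repr sM).
rewrite (coord_expansion (mem_vspan_max_indep v_repr x)).
rewrite (coord_expansion (mem_vspan_max_indep v_repr y)).
by apply: eq_bigr => i _; have := hxy i; rewrite !ffunE => ->.
Qed.

Lemma cosimple_max_indep_card : cosimple M -> (#|B| <= #|F| ^ #|~: B|)%N.
Proof.
move=> csM; pose h i : {ffun 'I_#|~: B| -> F} := [ffun t => c i (v (enum_val t))].
suff h_inj : injective h by have := leq_card h h_inj; rewrite card_ffun !card_ord.
move=> i j /ffunP hij; apply/eqP; apply: contraT => ij.
have cij : {in ~: B, forall x, c i (v x) = c j (v x)}.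
  by move=> x xB; have := hij (enum_rank_in xB x); rewrite !ffunE enum_rankK_in.
have := csM [set basis_elt i; basis_elt j]; rewrite cards2 ltnS leq_b1.
by rewrite (negbTE (equal_coords_not_coindep v_repr ij cij)) => /(_ isT).
Qed.

Lemma uniform_max_indep_card k l :
  kl_uniform k l M -> (l < #|~: B|)%N -> (#|B| <= k * #|F| ^ l.+1)%N.
Proof.
move=> unif lB; rewrite leqNgt; apply/negP => big.
have [e e_inj eB] := inj_ord_of_leq_card lB.
pose h i : {ffun 'I_l.+1 -> F} := [ffun t => c i (v (e t))].
have [|u fiber] := @pigeonhole_fiber _ _ h k; first by rewrite card_ffun !card_ord.
apply: unif; apply: (common_coords_minor (u := u) v_repr e_inj _ _ fiber).
  by move=> t; have := eB t; rewrite inE.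
by move=> i; rewrite inE => /eqP <- t; rewrite ffunE.
Qed.

Lemma max_indep_card_bound k l : (0 < k)%N ->
  cosimple M -> kl_uniform k l M -> (#|B| <= k * #|F| ^ l.+1)%N.
Proof.
move=> k_gt0 csM unif; have [lB | /(uniform_max_indep_card unif) //] := leqP #|~: B| l.
apply: leq_trans (cosimple_max_indep_card csM) (leq_trans _ (leq_pmull _ k_gt0)).
by rewrite leq_pexp2l ?(ltnW (card_finNzRing_gt1 F)) // leqW.
Qed.

End FiniteField.

Definition matroid_axioms (T : finType) (S : {set {set T}}) : Prop :=
  [/\ set0 \in S,
      forall X Y : {set T}, X \subset Y -> Y \in S -> X \in S
    & forall X Y : {set T}, X \in S -> Y \in S -> (#|X| < #|Y|)%N ->
        exists2 y, y \in Y :\: X & y |: X \in S].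

Lemma matroid_axioms_set0 (T : finType) : matroid_axioms [set set0 : {set T}].
Proof.
split=> [|X Y|X Y]; rewrite !inE //.
  by move=> XY /eqP Y0; move: XY; rewrite Y0 subset0.
by move=> /eqP-> /eqP->; rewrite cards0.
Qed.

Definition matroid_of_axioms (T : finType) (S : {set {set T}}) (ax : matroid_axioms S) :
    matroid T :=
  let: And3 S0 S_sub S_aug := ax in @Matroid T (fun X => X \in S) S0 S_sub S_aug.

(* Junk value [matroid_of_axioms (matroid_axioms_set0 T)] when [S] is not the
   family of independent sets of a matroid. *)
Definition matroid_of (T : finType) (S : {set {set T}}) : matroid T :=
  if excluded_middle_informative (matroid_axioms S) is left ax then matroid_of_axioms ax
  else matroid_of_axioms (matroid_axioms_set0 T).

Lemma indep_matroid_of (T : finType) (S : {set {set T}}) X :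
  matroid_axioms S -> indep (matroid_of S) X = (X \in S).
Proof.
by rewrite /matroid_of => ax; case: excluded_middle_informative => [[] // | /(_ ax)].
Qed.

Definition relabel_sets (T : finType) (M : matroid T) : {set {set 'I_#|T|}} :=
  [set X : {set 'I_#|T|} | indep M (enum_rank @^-1: X)].

Lemma matroid_axioms_relabel (T : finType) (M : matroid T) :
  matroid_axioms (relabel_sets M).
Proof.
have card_pre (X : {set 'I_#|T|}) : #|enum_rank @^-1: X| = #|X|.
  exact/on_card_preimset/onW_bij/enum_rank_bij.
split=> [|X Y XY|X Y]; rewrite !inE ?preimset0 ?indep0 //.
  by apply: indep_sub; apply: preimsetS.
move=> iX iY; rewrite -!card_pre => XY.
have [y yYX iy] := indep_aug iX iY XY.
exists (enum_rank y); first by move: yYX; rewrite !inE.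
rewrite inE; congr (indep M _): iy; apply/setP => x.
by rewrite !inE (inj_eq enum_rank_inj).
Qed.

Lemma miso_relabel (T : finType) (M : matroid T) : miso M (matroid_of (relabel_sets M)).
Proof.
exists enum_rank; split=> [|X]; first exact: enum_rank_bij.
rewrite (indep_matroid_of _ (matroid_axioms_relabel M)) inE; congr (indep M _).
by apply/setP => x; rewrite inE (mem_imset _ _ enum_rank_inj).
Qed.

Lemma small_matroids_finite (N : nat) :
  exists m (L : 'I_m -> {n : nat & matroid 'I_n}),
    forall (T : finType) (M : matroid T),
      (#|T| <= N)%N -> exists i : 'I_m, miso M (projT2 (L i)).
Proof.
pose code : finType := {n : 'I_N.+1 & {set {set 'I_n}}}.
exists #|code|, (fun i => let: existT n fam := enum_val (i : 'I_#|code|) in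
  existT (fun n : nat => matroid 'I_n) n (matroid_of fam)).
move=> T M TN; pose n : 'I_N.+1 := Ordinal (TN : (#|T| < N.+1)%N).
exists (enum_rank (@Tagged _ n (fun n : 'I_N.+1 => {set {set 'I_n}}) (relabel_sets M))).
by rewrite enum_rankK; apply: miso_relabel.
Qed.

Theorem theorem1p1 (k l q : nat) :
  (0 < k)%N -> (0 < l)%N -> prime_power q ->
  exists (m : nat) (L : 'I_m -> {n : nat & matroid 'I_n}),
    forall (T : finType) (M : matroid T),
      simple M -> cosimple M -> representable q M -> kl_uniform k l M ->
      exists i : 'I_m, miso M (projT2 (L i)).
Proof.
move=> k_gt0 _ _; have [m [L small]] := small_matroids_finite (q ^ (k * q ^ l.+1)).
exists m, L => T M sM csM [F [n [v [qF v_repr]]]] unif; apply: small; rewrite -qF.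
apply: leq_trans (simple_card_leq v_repr sM) _.
by rewrite leq_pexp2l ?(ltnW (card_finNzRing_gt1 F)) ?(max_indep_card_bound v_repr k_gt0).
Qed.
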